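(* Let $G$ be a modular noetherian right $\ell$-group in which the meet $s^{-1} := \bigwedge X(G^-)$ exists. Then an element $g \in G^-$ is meet-irreducible in $G^-$ if and only if $g$ is a dual chain, i.e. the interval $[g,e]$ is a chain.
   Context: A right $\ell$-group is a group $G$ (identity $e$) with a right-invariant partial order making $G$ a lattice. It is modular if the lattice is modular. It is noetherian if for each $g$ the set $\{h \geq g\}$ satisfies the descending chain condition and the set $\{h \leq g\}$ satisfies the ascending chain condition. $G^- = \{g \leq e\}$, $X(G^-)$ is the set of elements covered by $e$, and $[a,b] = \{x : a \leq x \leq b\}$. An element $g$ is meet-irreducible in $G^-$ if there are no $a,b \in G^-$, both different from $g$, with $g = a\wedge b$. *)

Set Implicit Arguments.

Section RLG.
Variables (T : Type) (mul : T -> T -> T) (inv : T -> T) (e : T)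
  (le : T -> T -> Prop) (meet join : T -> T -> T).

Definition lt (x y : T) : Prop := le x y /\ x <> y.

Definition is_group : Prop :=
  (forall x y z, mul x (mul y z) = mul (mul x y) z) /\
  (forall x, mul e x = x) /\ (forall x, mul x e = x) /\
  (forall x, mul (inv x) x = e) /\ (forall x, mul x (inv x) = e).

Definition is_partial_order : Prop :=
  (forall x, le x x) /\ (forall x y, le x y -> le y x -> x = y) /\
  (forall x y z, le x y -> le y z -> le x z).

Definition right_invariant : Prop :=
  forall x y z, le x y -> le (mul x z) (mul y z).

Definition is_lattice : Prop :=
  (forall x y, le (meet x y) x /\ le (meet x y) y /\
     forall z, le z x -> le z y -> le z (meet x y)) /\
  (forall x y, le x (join x y) /\ le y (join x y) /\
     forall z, le x z -> le y z -> le (join x y) z).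

Definition is_right_lgroup : Prop :=
  is_group /\ is_partial_order /\ right_invariant /\ is_lattice.

Definition modular : Prop :=
  forall a b c, le a c -> join a (meet b c) = meet (join a b) c.

Definition noetherian : Prop :=
  forall g,
    (~ exists f : nat -> T, (forall n, le g (f n)) /\ (forall n, lt (f (S n)) (f n))) /\
    (~ exists f : nat -> T, (forall n, le (f n) g) /\ (forall n, lt (f n) (f (S n)))).

Definition negcone (x : T) : Prop := le x e.

Definition covered_by_e (x : T) : Prop :=
  lt x e /\ ~ exists y, lt x y /\ lt y e.

Definition is_glb (P : T -> Prop) (m : T) : Prop :=
  (forall x, P x -> le m x) /\ (forall z, (forall x, P x -> le z x) -> le z m).

Definition meet_irreducible_neg (g : T) : Prop :=
  negcone g /\
  ~ exists a b, negcone a /\ negcone b /\ a <> g /\ b <> g /\ g = meet a b.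

Definition dual_chain (g : T) : Prop :=
  forall x y, le g x -> le x e -> le g y -> le y e -> le x y \/ le y x.

End RLG.

(* Let D = s^-1 be the meet of the coatoms of G^- (the elements covered by e).  In a modular
   lattice with DCC, an interval [D, e] whose bottom is the meet of the coatoms of e is
   complemented, and right translation carries this to every interval [D t, t].  This yields
   that every atom of G^+ lies below D^-1 and that conjugation by D maps coatoms to coatoms.
   The key consequence: if g is covered by g1 and g1 has two distinct upper covers with a common
   upper cover u, then g has an upper cover other than g1 below u.  Hence an upper cover in
   G^- of a meet-irreducible element is again meet-irreducible; since a meet-irreducible h has a
   unique upper cover in [h, e], ACC below e shows that [g, e] is a chain. *)

From Stdlib Require Import Classical ClassicalEpsilon.

Set Implicit Arguments.

Lemma exists_minimal_of_no_descending_chain (T : Type) (R : T -> T -> Prop)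
  (P : T -> Prop) :
  ~ (exists f : nat -> T, (forall n, P (f n)) /\ (forall n, R (f (S n)) (f n))) ->
  (exists x, P x) -> exists x, P x /\ forall y, P y -> ~ R y x.
Proof.
  intros Hchain [x0 Hx0]. apply NNPP; intro Hnone.
  assert (Hstep : forall s : {x | P x}, {t : {x | P x} | R (proj1_sig t) (proj1_sig s)}).
  { intros [x Hx]. apply constructive_indefinite_description.
    apply NNPP; intro Hmin. apply Hnone. exists x. split; [exact Hx |].
    intros y Hy HR. apply Hmin. exists (exist P y Hy). exact HR. }
  apply Hchain.
  exists (fun n => proj1_sig (Nat.iter n (fun s => proj1_sig (Hstep s)) (exist P x0 Hx0))).
  split.
  - intro n. apply proj2_sig.
  - intro n. exact (proj2_sig (Hstep _)).
Qed.

Section Lattice.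
Variables (T : Type) (le : T -> T -> Prop) (meet join : T -> T -> T).
Hypothesis Hpo : is_partial_order le.
Hypothesis Hlat : is_lattice le meet join.

Local Infix "<=" := le.
Local Notation "x < y" := (lt le x y).
Local Notation covby x y := (covered_by_e y le x).

Lemma le_refl x : x <= x.
Proof. apply Hpo. Qed.
Lemma le_antisym x y : x <= y -> y <= x -> x = y.
Proof. apply Hpo. Qed.
Lemma le_trans x y z : x <= y -> y <= z -> x <= z.
Proof. apply Hpo. Qed.

Lemma meet_lb_l x y : meet x y <= x.
Proof. apply Hlat. Qed.
Lemma meet_lb_r x y : meet x y <= y.
Proof. apply Hlat. Qed.
Lemma meet_glb x y z : z <= x -> z <= y -> z <= meet x y.
Proof. apply Hlat. Qed.
Lemma join_ub_l x y : x <= join x y.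
Proof. apply Hlat. Qed.
Lemma join_ub_r x y : y <= join x y.
Proof. apply Hlat. Qed.
Lemma join_lub x y z : x <= z -> y <= z -> join x y <= z.
Proof. apply Hlat. Qed.

Hint Resolve le_refl meet_lb_l meet_lb_r join_ub_l join_ub_r : core.

Lemma meet_l x y : x <= y -> meet x y = x.
Proof. intro H. apply le_antisym; auto using meet_glb. Qed.
Lemma meet_r x y : y <= x -> meet x y = y.
Proof. intro H. apply le_antisym; auto using meet_glb. Qed.
Lemma join_l x y : y <= x -> join x y = x.
Proof. intro H. apply le_antisym; auto using join_lub. Qed.
Lemma join_r x y : x <= y -> join x y = y.
Proof. intro H. apply le_antisym; auto using join_lub. Qed.
Lemma meet_comm x y : meet x y = meet y x.
Proof. apply le_antisym; auto using meet_glb. Qed.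
Lemma join_comm x y : join x y = join y x.
Proof. apply le_antisym; auto using join_lub. Qed.

Lemma covby_le x y : covby x y -> x <= y.
Proof. intros [[H _] _]. exact H. Qed.
Lemma covby_neq x y : covby x y -> x <> y.
Proof. intros [[_ H] _]. exact H. Qed.
Lemma covby_between x y z : covby x y -> x <= z -> z <= y -> z = x \/ z = y.
Proof.
  intros [_ Hno] Hxz Hzy.
  destruct (classic (z = x)) as [E | Hzx]; [now left |].
  destruct (classic (z = y)) as [E | Hzy']; [now right |].
  exfalso. apply Hno. exists z. split; split; auto.
Qed.
Lemma covby_intro x y :
  x <= y -> x <> y -> (forall z, x <= z -> z <= y -> z = x \/ z = y) -> covby x y.
Proof.
  intros Hxy Hne Hbetween. split; [split; assumption |].
  intros [z [[Hxz Hxz'] [Hzy Hzy']]].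
  destruct (Hbetween z Hxz Hzy); congruence.
Qed.

Lemma covby_incomparable x y1 y2 :
  covby x y1 -> covby x y2 -> y1 <> y2 -> ~ y1 <= y2.
Proof.
  intros H1 H2 Hne H12.
  destruct (covby_between H2 (covby_le H1) H12) as [E | E]; [| congruence].
  exact (covby_neq H1 (eq_sym E)).
Qed.

Lemma covby_meet_eq x y z : covby x y -> x <= z -> ~ y <= z -> meet y z = x.
Proof.
  intros Hxy Hxz Hyz.
  destruct (covby_between Hxy (meet_glb (covby_le Hxy) Hxz) (meet_lb_l y z))
    as [E | E]; [exact E |].
  exfalso. apply Hyz. rewrite <- E. auto.
Qed.

Lemma covby_join_eq x y z : covby x y -> z <= y -> ~ z <= x -> join x z = y.
Proof.
  intros Hxy Hzy Hzx.
  destruct (covby_between Hxy (join_ub_l x z) (join_lub (covby_le Hxy) Hzy))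
    as [E | E]; [| exact E].
  exfalso. apply Hzx. rewrite <- E. auto.
Qed.

Lemma covby_meet_of_neq x y1 y2 : covby x y1 -> covby x y2 -> y1 <> y2 -> meet y1 y2 = x.
Proof.
  intros H1 H2 Hne.
  apply (covby_meet_eq H1 (covby_le H2)). exact (covby_incomparable H1 H2 Hne).
Qed.

Lemma dual_chain_refl t : dual_chain t le t.
Proof.
  intros x y Hx1 Hx2 Hy1 Hy2. left.
  rewrite (le_antisym Hx2 Hx1), (le_antisym Hy2 Hy1). apply le_refl.
Qed.

Lemma dual_chain_covby t h g :
  covby h g -> (forall y, h < y -> y <= t -> g <= y) -> dual_chain t le g ->
  dual_chain t le h.
Proof.
  intros Hhg Habove Hg x y Hx1 Hx2 Hy1 Hy2.
  destruct (classic (x = h)) as [-> | Hx]; [now left |].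
  destruct (classic (y = h)) as [-> | Hy]; [now right |].
  apply Hg; auto; apply Habove; auto; split; auto.
Qed.

Lemma dual_chain_meet_irreducible t g :
  g <= t -> dual_chain t le g -> meet_irreducible_neg t le meet g.
Proof.
  intros Hg Hchain. split; [exact Hg |].
  intros [a [b [Ha [Hb [Hag [Hbg Hab]]]]]].
  assert (Hga : g <= a) by (rewrite Hab; auto).
  assert (Hgb : g <= b) by (rewrite Hab; auto).
  destruct (Hchain a b Hga Ha Hgb Hb) as [H | H].
  - apply Hag. rewrite Hab. symmetry. apply meet_l, H.
  - apply Hbg. rewrite Hab. symmetry. apply meet_r, H.
Qed.

Section Noetherian.
Hypothesis Hnoeth : noetherian le.

Lemma exists_minimal g (P : T -> Prop) :
  (exists x, P x) -> (forall x, P x -> g <= x) ->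
  exists x, P x /\ forall y, P y -> y <= x -> y = x.
Proof.
  intros Hex Hg.
  destruct (@exists_minimal_of_no_descending_chain T (fun y x => y < x) P) as [x [Hx Hmin]];
    [| exact Hex |].
  - intros [f [HPf Hf]]. apply (proj1 (Hnoeth g)). exists f. auto.
  - exists x. split; [exact Hx |]. intros y Hy Hyx.
    apply NNPP. intro Hne. exact (Hmin y Hy (conj Hyx Hne)).
Qed.

Lemma exists_maximal g (P : T -> Prop) :
  (exists x, P x) -> (forall x, P x -> x <= g) ->
  exists x, P x /\ forall y, P y -> x <= y -> y = x.
Proof.
  intros Hex Hg.
  destruct (@exists_minimal_of_no_descending_chain T (fun y x => x < y) P) as [x [Hx Hmax]];
    [| exact Hex |].
  - intros [f [HPf Hf]]. apply (proj2 (Hnoeth g)). exists f. auto.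
  - exists x. split; [exact Hx |]. intros y Hy Hxy.
    apply NNPP. intro Hne. exact (Hmax y Hy (conj Hxy (not_eq_sym Hne))).
Qed.

Lemma exists_covby_above x y : x < y -> exists z, covby x z /\ z <= y.
Proof.
  intros Hxy.
  destruct (@exists_minimal x (fun z => x < z /\ z <= y)) as [z [[Hxz Hzy] Hmin]].
  - exists y. split; auto.
  - intros z [[H _] _]. exact H.
  - exists z. split; [| exact Hzy].
    apply covby_intro; try apply Hxz.
    intros w Hxw Hwz. destruct (classic (w = x)) as [E | Hne]; [now left |].
    right. apply Hmin; auto. split; [split; auto | exact (le_trans Hwz Hzy)].
Qed.

Lemma exists_covby_below x y : x < y -> exists z, x <= z /\ covby z y.
Proof.
  intros Hxy.
  destruct (@exists_maximal y (fun z => x <= z /\ z < y)) as [z [[Hxz Hzy] Hmax]].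
  - exists x. split; auto.
  - intros z [_ [H _]]. exact H.
  - exists z. split; [exact Hxz |].
    apply covby_intro; try apply Hzy.
    intros w Hzw Hwy. destruct (classic (w = y)) as [E | Hne]; [now right |].
    left. apply Hmax; auto. split; [exact (le_trans Hxz Hzw) | split; auto].
Qed.

Lemma meet_irreducible_covby_le t h g y :
  meet_irreducible_neg t le meet h -> covby h g -> g <= t -> h < y -> y <= t -> g <= y.
Proof.
  intros [_ Hirr] Hhg Hgt Hhy Hyt.
  destruct (exists_covby_above Hhy) as [y1 [Hhy1 Hy1y]].
  destruct (classic (y1 = g)) as [<- | Hne]; [exact Hy1y |].
  exfalso. apply Hirr. exists g, y1.
  repeat split.
  - exact Hgt.
  - exact (le_trans Hy1y Hyt).
  - exact (not_eq_sym (covby_neq Hhg)).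
  - exact (not_eq_sym (covby_neq Hhy1)).
  - symmetry. exact (covby_meet_of_neq Hhg Hhy1 (not_eq_sym Hne)).
Qed.

Section Modular.
Hypothesis Hmod : modular le meet join.

Lemma covby_join p a x : covby p a -> ~ a <= x -> p <= x -> covby x (join x a).
Proof.
  intros Hpa Hax Hpx.
  apply covby_intro; auto.
  - intro E. apply Hax. rewrite E. auto.
  - intros z Hxz Hz.
    destruct (covby_between Hpa (meet_glb (covby_le Hpa) (le_trans Hpx Hxz)) (meet_lb_l a z))
      as [E | E].
    + left. rewrite <- (meet_r Hz), <- (@Hmod x a z Hxz), E. exact (join_l Hpx).
    + right. apply le_antisym; auto. apply join_lub; auto. rewrite <- E. auto.
Qed.

Lemma covby_meet a q x : covby a q -> ~ x <= a -> x <= q -> covby (meet x a) x.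
Proof.
  intros Haq Hxa Hxq.
  apply covby_intro; auto.
  - intro E. apply Hxa. rewrite <- E. auto.
  - intros z Hz Hzx.
    destruct (covby_between Haq (join_ub_l a z) (join_lub (covby_le Haq) (le_trans Hzx Hxq)))
      as [E | E].
    + left. apply le_antisym; auto. apply meet_glb; auto. rewrite <- E. auto.
    + right. rewrite <- (join_l Hz), meet_comm, (@Hmod z a x Hzx), join_comm, E.
      exact (meet_r Hxq).
Qed.

Section ComplementedInterval.
Variables (m t : T).
Hypothesis Hglb : is_glb le (covered_by_e t le) m.
Hypothesis Hmt : m <= t.

Lemma complement_exists x : m <= x -> x <= t ->
  exists y, m <= y /\ y <= t /\ meet x y = m /\ join x y = t.
Proof.
  intros Hmx Hxt.
  destruct (@exists_minimal m (fun y => m <= y /\ y <= t /\ join x y = t))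
    as [y [[Hmy [Hyt Hxy]] Hmin]].
  - exists t. repeat split; auto. exact (join_r Hxt).
  - intros y [H _]. exact H.
  - exists y. repeat split; auto.
    (* Otherwise some coatom [c] misses [meet x y], and [meet y c] is a smaller witness. *)
    apply NNPP. intro Hne.
    assert (Hc : exists c, covby c t /\ ~ meet x y <= c).
    { apply NNPP. intro Hall. apply Hne. apply le_antisym.
      - apply Hglb. intros c Hc. apply NNPP. intro H. apply Hall. exists c. auto.
      - apply meet_glb; auto. }
    destruct Hc as [c [Hct Hxyc]].
    assert (Hyc : ~ y <= c) by (intro H; apply Hxyc; exact (le_trans (meet_lb_r x y) H)).
    assert (Hcov : covby (meet y c) y) by exact (covby_meet Hct Hyc Hyt).
    assert (Hrestore : join (meet y c) (meet x y) = y).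
    { apply (covby_join_eq Hcov); auto. intro H. apply Hxyc.
      exact (le_trans H (meet_lb_r y c)). }
    assert (Hjoin : join x (meet y c) = t).
    { apply le_antisym.
      - apply join_lub; [exact Hxt | exact (le_trans (meet_lb_l y c) Hyt)].
      - rewrite <- Hxy. apply join_lub; auto. rewrite <- Hrestore at 1.
        apply join_lub; [auto | exact (le_trans (meet_lb_l x y) (join_ub_l x _))]. }
    apply (covby_neq Hcov). apply Hmin; auto.
    repeat split.
    + apply meet_glb; [exact Hmy | apply Hglb, Hct].
    + exact (le_trans (meet_lb_l y c) Hyt).
    + exact Hjoin.
Qed.

Lemma relative_complement_exists p x q : m <= p -> p <= x -> x <= q -> q <= t ->
  exists y, p <= y /\ y <= q /\ meet x y = p /\ join x y = q.
Proof.
  intros Hmp Hpx Hxq Hqt.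
  destruct (@complement_exists x) as [y0 [_ [_ [Hmeet Hjoin]]]]; eauto using le_trans.
  exists (meet (join p y0) q). repeat split.
  - apply meet_glb; eauto using le_trans.
  - auto.
  - apply le_antisym.
    + apply le_trans with (meet (join p y0) x).
      * apply meet_glb; auto. exact (le_trans (meet_lb_r _ _) (meet_lb_l _ _)).
      * rewrite <- (@Hmod p y0 x Hpx), meet_comm, Hmeet. apply join_lub; auto.
    + apply meet_glb; auto. apply meet_glb; eauto using le_trans.
  - rewrite (@Hmod x (join p y0) q Hxq). apply meet_r.
    apply le_trans with t; auto. rewrite <- Hjoin.
    apply join_lub; auto. apply le_trans with (join p y0); auto.
Qed.

Lemma exists_other_covby p q w : m <= p -> q <= t -> covby p w -> w <= q -> w <> q ->
  exists y, covby p y /\ y <= q /\ y <> w.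
Proof.
  intros Hmp Hqt Hpw Hwq Hne.
  destruct (@relative_complement_exists p w q) as [y [Hpy [Hyq [Hmeet Hjoin]]]];
    auto using covby_le.
  assert (Hpy' : p < y).
  { split; [exact Hpy |]. intros <-. apply Hne. rewrite <- Hjoin.
    symmetry. exact (join_l (covby_le Hpw)). }
  destruct (exists_covby_above Hpy') as [z [Hpz Hzy]].
  exists z. split; [exact Hpz | split; [exact (le_trans Hzy Hyq) |]].
  intros ->. apply (covby_neq Hpw). rewrite <- Hmeet. exact (meet_l Hzy).
Qed.

Lemma le_of_atoms_le u : m <= u -> (forall z, covby m z -> z <= t -> z <= u) -> t <= u.
Proof.
  intros Hmu Hatoms.
  destruct (classic (meet t u = t)) as [E | Hne]; [rewrite <- E; auto |].
  destruct (@complement_exists (meet t u)) as [v [Hmv [Hvt [Hmeet Hjoin]]]];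
    auto using meet_glb.
  assert (Hmv' : m < v).
  { split; [exact Hmv |]. intros <-. apply Hne. rewrite <- Hjoin at 2.
    symmetry. apply join_l. apply meet_glb; auto. }
  destruct (exists_covby_above Hmv') as [z [Hmz Hzv]].
  exfalso. apply (covby_neq Hmz). apply le_antisym; [exact (covby_le Hmz) |].
  rewrite <- Hmeet. apply meet_glb; [| exact Hzv].
  apply meet_glb; eauto using le_trans.
Qed.

End ComplementedInterval.

Section RightLGroup.
Variables (mul : T -> T -> T) (inv : T -> T) (e : T).
Hypothesis Hgrp : is_group mul inv e.
Hypothesis Hri : right_invariant mul le.

Local Infix "*" := mul.
Local Notation coatom x := (covby x e).
Local Notation atom x := (covby e x).

Lemma mulgA x y z : x * (y * z) = x * y * z.
Proof. apply Hgrp. Qed.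
Lemma mul1g x : e * x = x.
Proof. apply Hgrp. Qed.
Lemma mulg1 x : x * e = x.
Proof. apply Hgrp. Qed.
Lemma mulVg x : inv x * x = e.
Proof. apply Hgrp. Qed.
Lemma mulgV x : x * inv x = e.
Proof. apply Hgrp. Qed.
Lemma mulKg x y : inv x * (x * y) = y.
Proof. rewrite mulgA, mulVg, mul1g. reflexivity. Qed.
Lemma mulKVg x y : x * (inv x * y) = y.
Proof. rewrite mulgA, mulgV, mul1g. reflexivity. Qed.

Ltac group_simpl :=
  repeat rewrite <- mulgA; repeat rewrite ?mulKg, ?mulKVg, ?mul1g, ?mulg1, ?mulVg, ?mulgV.

Lemma mulIg x y z : x * z = y * z -> x = y.
Proof.
  intro E. rewrite <- (mulg1 x), <- (mulg1 y), <- (mulgV z), !mulgA, E. reflexivity.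
Qed.
Lemma mulgI x y z : z * x = z * y -> x = y.
Proof. intro E. rewrite <- (mulKg z x), <- (mulKg z y), E. reflexivity. Qed.
Lemma invgK x : inv (inv x) = x.
Proof. apply (@mulIg _ _ (inv x)). rewrite mulVg, mulgV. reflexivity. Qed.
Lemma invMg x y : inv (x * y) = inv y * inv x.
Proof. apply (@mulIg _ _ (x * y)). rewrite mulVg. group_simpl. reflexivity. Qed.
Lemma invg1 : inv e = e.
Proof. rewrite <- (mul1g (inv e)). apply mulgV. Qed.

Ltac group_norm := repeat rewrite ?invMg, ?invgK, ?invg1; group_simpl.

Lemma le_mul2r x y z : x * z <= y * z <-> x <= y.
Proof.
  split; [| apply Hri]. intro H.
  apply (Hri (inv z)) in H. revert H. group_simpl. auto.
Qed.

Lemma le_div1 x y : x <= y <-> x * inv y <= e.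
Proof. rewrite <- (le_mul2r x y (inv y)), mulgV. reflexivity. Qed.

Lemma mul_le_r x y : x <= e -> x * y <= y.
Proof. intro H. rewrite <- (mul1g y) at 2. apply Hri, H. Qed.

Lemma mul_le1 x y : x <= e -> y <= e -> x * y <= e.
Proof. intros Hx Hy. exact (le_trans (mul_le_r y Hx) Hy). Qed.

Lemma inv_ge1 x : x <= e -> e <= inv x.
Proof. intro H. apply (Hri (inv x)) in H. rewrite mulgV, mul1g in H. exact H. Qed.

Lemma covby_mulr x y z : covby x y -> covby (x * z) (y * z).
Proof.
  intro Hxy. apply covby_intro.
  - apply Hri, covby_le, Hxy.
  - intro E. exact (covby_neq Hxy (mulIg E)).
  - intros w Hxw Hwy.
    apply (Hri (inv z)) in Hxw, Hwy. revert Hxw Hwy. group_simpl. intros Hxw Hwy.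
    destruct (covby_between Hxy Hxw Hwy) as [E | E]; [left | right];
      rewrite <- E; group_simpl; reflexivity.
Qed.

Lemma covby_mul2r x y z : covby (x * z) (y * z) <-> covby x y.
Proof.
  split; [| apply covby_mulr]. intro H.
  apply (covby_mulr (inv z)) in H. revert H. group_simpl. auto.
Qed.

Lemma covby_iff_coatom x y : covby x y <-> coatom (x * inv y).
Proof. rewrite <- (covby_mul2r x y (inv y)), mulgV. reflexivity. Qed.

Lemma covby_iff_atom x y : covby x y <-> atom (y * inv x).
Proof. rewrite <- (covby_mul2r x y (inv x)), mulgV. reflexivity. Qed.

Lemma coatom_mulr a t : coatom a -> covby (a * t) t.
Proof. intro Ha. apply (covby_mulr t) in Ha. rewrite mul1g in Ha. exact Ha. Qed.

Lemma coatom_inv_of_atom x : atom x -> coatom (inv x).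
Proof. intro Hx. apply (covby_mulr (inv x)) in Hx. rewrite mul1g, mulgV in Hx. exact Hx. Qed.

Lemma atom_inv_of_coatom x : coatom x -> atom (inv x).
Proof. intro Hx. apply (covby_mulr (inv x)) in Hx. rewrite mul1g, mulgV in Hx. exact Hx. Qed.

Section GlbOfCoatoms.
Variable D : T.
Hypothesis HD : is_glb le (covered_by_e e le) D.
Hypothesis HDe : D <= e.

Lemma glb_le_coatom a : coatom a -> D <= a.
Proof. apply HD. Qed.
Lemma le_glb z : (forall a, coatom a -> z <= a) -> z <= D.
Proof. apply HD. Qed.

Lemma glb_mul_le y : y <= e -> D * y <= D.
Proof.
  intro Hy. apply le_glb. intros b Hb.
  destruct (classic (y <= b)) as [Hyb | Hyb].
  - exact (le_trans (mul_le_r y HDe) Hyb).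
  - assert (Hcov : coatom (meet y b * inv y))
      by exact (proj1 (covby_iff_coatom _ _) (covby_meet Hb Hyb Hy)).
    assert (H := Hri y (glb_le_coatom Hcov)). revert H. group_simpl. intro H.
    exact (le_trans H (meet_lb_r y b)).
Qed.

Lemma glb_conj_monotone x y : x <= y -> D * x * inv D <= D * y * inv D.
Proof.
  intro Hxy. apply le_div1. apply le_div1 in Hxy.
  assert (H := Hri (inv D) (glb_mul_le Hxy)). revert H. group_norm. auto.
Qed.

Lemma glb_mulr_coatoms t : is_glb le (covered_by_e t le) (D * t).
Proof.
  split.
  - intros x Hxt. apply covby_iff_coatom, glb_le_coatom, (Hri t) in Hxt.
    revert Hxt. group_simpl. auto.
  - intros z Hz. rewrite <- (le_mul2r _ _ (inv t)). group_simpl.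
    apply le_glb. intros a Ha. rewrite <- (le_mul2r _ _ t). group_simpl.
    apply Hz, coatom_mulr, Ha.
Qed.

Lemma glb_le_join_mul a b z :
  coatom a -> coatom b -> z <= e -> join b z = e -> D <= join (a * b) z.
Proof.
  intros Ha Hb Hz Hbz.
  assert (Hy : join (a * b) z <= e).
  { apply join_lub; [apply mul_le1; apply covby_le |]; assumption. }
  destruct (classic (b <= join (a * b) z)) as [Hb' | Hb'].
  - rewrite (le_antisym Hy); [exact HDe |].
    rewrite <- Hbz. apply join_lub; auto.
  - apply glb_le_coatom.
    assert (Htop : join (join (a * b) z) b = e).
    { apply le_antisym; [apply join_lub; [exact Hy | apply covby_le, Hb] |].
      rewrite <- Hbz. apply join_lub; [auto |].
      exact (le_trans (join_ub_r (a * b) z) (join_ub_l _ b)). }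
    rewrite <- Htop. exact (covby_join (coatom_mulr b Ha) Hb' (join_ub_l _ z)).
Qed.

Lemma glb_le_complement b z :
  coatom b -> z <= e -> join b z = e -> meet z b = D * b -> D <= z.
Proof.
  intros Hb Hz Hbz Hzb.
  set (t := join D z).
  assert (Htb : meet t b <= D * b).
  { rewrite <- (le_mul2r _ _ (inv b)). group_simpl.
    apply le_glb. intros a Ha. rewrite <- (le_mul2r _ _ b). group_simpl.
    (* modularity: [meet (join (a * b) z) b = join (a * b) (meet z b)], and [meet z b <= a * b] *)
    apply le_trans with (meet (join (a * b) z) b).
    - apply meet_glb; [| auto]. apply le_trans with t; [auto |].
      apply join_lub; [apply (glb_le_join_mul Ha Hb Hz Hbz) | auto].
    - rewrite <- (@Hmod (a * b) z b (mul_le_r b (covby_le Ha))), Hzb.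
      apply join_lub; [auto |]. apply Hri, glb_le_coatom, Ha. }
  assert (Ht : t = join z (meet b t)).
  { rewrite (@Hmod z b t (join_ub_r D z)), join_comm, Hbz. symmetry. apply meet_r.
    apply join_lub; [exact HDe | exact Hz]. }
  apply le_trans with t; [exact (join_ub_l D z) |]. rewrite Ht. apply join_lub; [auto |].
  rewrite meet_comm. rewrite <- Hzb in Htb. exact (le_trans Htb (meet_lb_l z b)).
Qed.

Lemma atom_le_inv_glb x : atom x -> x <= inv D.
Proof.
  (* Otherwise [K = join (inv D) x] covers [inv D], [b = inv D * inv K] is a coatom, and
     [z = x * inv K] is a complement of [b] below [e] with [meet z b = D * b]; this forces
     [D <= z], and [join D (D * b)] then lies strictly between the cover [D * b] of [z] and [z]. *)
  intro Hx. apply NNPP. intro Hn.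
  set (K := join (inv D) x).
  assert (HK : covby (inv D) K) by exact (covby_join Hx Hn (inv_ge1 HDe)).
  set (b := inv D * inv K).
  assert (Hb : coatom b) by exact (proj1 (covby_iff_coatom _ _) HK).
  assert (HDb : D * b = inv K) by (unfold b; group_simpl; reflexivity).
  set (z := x * inv K).
  assert (Hz : z <= e) by exact (proj1 (le_div1 _ _) (join_ub_r _ _)).
  assert (Hcov : covby (D * b) z).
  { rewrite HDb. apply covby_iff_coatom. unfold z. group_norm.
    apply coatom_inv_of_atom, Hx. }
  assert (Hzb : ~ z <= b).
  { intro H. apply Hn. apply le_div1 in H. apply le_div1. revert H.
    unfold z, b. group_norm. auto. }
  assert (HDz : D <= z).
  { apply (glb_le_complement Hb Hz).
    - exact (covby_join_eq Hb Hz Hzb).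
    - exact (covby_meet_eq Hcov (mul_le_r b HDe) Hzb). }
  destruct (covby_between Hcov (join_ub_r D (D * b)) (join_lub HDz (covby_le Hcov)))
    as [E | E].
  - apply (covby_neq Hb). apply (@mulgI _ _ D). rewrite mulg1.
    apply le_antisym; [apply glb_mul_le, covby_le, Hb |].
    rewrite <- E. auto.
  - apply Hzb. rewrite <- E.
    apply join_lub; [apply glb_le_coatom, Hb | apply mul_le_r, HDe].
Qed.

Lemma atom_mul_coatom_le_inv_glb x c : atom x -> coatom c -> x * c <= inv D.
Proof.
  intros Hx Hc.
  destruct (classic (x = inv c)) as [-> | Hne].
  { rewrite mulVg. apply inv_ge1, HDe. }
  assert (Hc' : atom (inv c)) by exact (atom_inv_of_coatom Hc).
  set (j := join (inv c) x).
  assert (Hj : covby (inv c) j)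
    by exact (covby_join Hx (covby_incomparable Hx Hc' Hne) (covby_le Hc')).
  apply (covby_iff_atom) in Hj. rewrite invgK in Hj.
  apply le_trans with (j * c); [apply Hri, join_ub_r | exact (atom_le_inv_glb Hj)].
Qed.

Lemma conj_glb_coatom_le c : coatom c -> inv D * c * D <= e.
Proof.
  intro Hc.
  assert (Hu : e <= inv D * inv c * D).
  { apply (le_of_atoms_le HD HDe).
    - apply le_div1. group_norm. apply mul_le1; [apply covby_le, Hc | exact HDe].
    - intros z Hz _. apply le_div1.
      assert (H := atom_mul_coatom_le_inv_glb (proj1 (covby_iff_atom _ _) Hz) Hc).
      apply le_div1 in H. revert H. group_norm. auto. }
  apply le_div1 in Hu. revert Hu. group_norm. auto.
Qed.

Lemma conj_glb_coatom c : coatom c -> coatom (inv D * c * D).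
Proof.
  intro Hc.
  assert (Hconj : forall x, D * (inv D * x * D) * inv D = x) by (intro; group_simpl; reflexivity).
  apply covby_intro; [exact (conj_glb_coatom_le Hc) | |].
  - intro E. apply (covby_neq Hc). rewrite <- (Hconj c), E. group_simpl. reflexivity.
  - intros z Hz1 Hz2.
    assert (Hc1 := glb_conj_monotone Hz1). assert (Hc2 := glb_conj_monotone Hz2).
    rewrite Hconj in Hc1. rewrite mulg1, mulgV in Hc2.
    assert (Hinj : forall x y, D * x * inv D = D * y * inv D -> x = y)
      by (intros x y E; exact (mulgI (mulIg E))).
    destruct (covby_between Hc Hc1 Hc2) as [E | E]; [left | right]; apply Hinj.
    + rewrite E, Hconj. reflexivity.
    + rewrite E, mulg1, mulgV. reflexivity.
Qed.

Lemma exists_atom_below c x v :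
  coatom c -> atom x -> x < v -> v <= inv D -> exists y, atom y /\ y <= v /\ y <= inv D * c.
Proof.
  intros Hc Hx [Hxv Hne] Hv.
  set (Z := inv D * c).
  assert (HZ : covby Z (inv D)).
  { apply covby_iff_coatom. unfold Z. rewrite invgK. exact (conj_glb_coatom Hc). }
  assert (HeZ : e <= Z).
  { assert (H := Hri c (atom_le_inv_glb (atom_inv_of_coatom Hc))).
    rewrite mulVg in H. exact H. }
  destruct (classic (x <= Z)) as [HxZ | HxZ]; [exists x; auto |].
  assert (HZx : join Z x = inv D) by exact (covby_join_eq HZ (le_trans Hxv Hv) HxZ).
  assert (Hv' : join x (meet Z v) = v).
  { rewrite (@Hmod x Z v Hxv), join_comm, HZx. exact (meet_r Hv). }
  assert (Hlt : e < meet Z v).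
  { split; [apply meet_glb; [exact HeZ | exact (le_trans (covby_le Hx) Hxv)] |].
    intro E. apply Hne. rewrite <- Hv', <- E. symmetry. apply join_l, covby_le, Hx. }
  destruct (exists_covby_above Hlt) as [y [Hy HyZv]].
  exists y. split; [exact Hy | split].
  - exact (le_trans HyZv (meet_lb_r Z v)).
  - exact (le_trans HyZv (meet_lb_l Z v)).
Qed.

Lemma le_inv_glb_of_two_atoms x1 x2 v :
  atom x1 -> atom x2 -> x1 <> x2 -> covby x1 v -> x2 <= v -> v <= inv D.
Proof.
  intros Hx1 Hx2 Hne Hx1v Hx2v.
  rewrite <- (covby_join_eq Hx1v Hx2v (covby_incomparable Hx2 Hx1 (not_eq_sym Hne))).
  apply join_lub; apply atom_le_inv_glb; assumption.
Qed.

Lemma exists_other_upper_cover g g1 u1 u2 u :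
  covby g g1 -> covby g1 u1 -> covby g1 u2 -> u1 <> u2 -> covby u1 u -> covby u2 u ->
  exists y, covby g y /\ y <= u /\ y <> g1.
Proof.
  intros Hgg1 Hu1 Hu2 Hne Hu1u Hu2u.
  assert (Hx1 := proj1 (covby_iff_atom _ _) Hu1).
  assert (Hx1v : covby (u1 * inv g1) (u * inv g1)) by exact (covby_mulr _ Hu1u).
  assert (Hv : u * inv g1 <= inv D).
  { apply (le_inv_glb_of_two_atoms Hx1 (proj1 (covby_iff_atom _ _) Hu2)); [| exact Hx1v |].
    - intro E. exact (Hne (mulIg E)).
    - exact (Hri _ (covby_le Hu2u)). }
  assert (Hc : coatom (g * inv g1)) by exact (proj1 (covby_iff_coatom _ _) Hgg1).
  destruct (exists_atom_below Hc Hx1 (proj1 Hx1v) Hv) as [x [Hx [Hxv Hxc]]].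
  (* [[g, inv D * g]] is a complemented interval [[D * t, t]]; [x * g1] lies in it below [u]
     and strictly above [g1], so [g1] is not the top of [meet (inv D * g) u]. *)
  assert (Hau : x * g1 <= u) by (apply (Hri g1) in Hxv; revert Hxv; group_simpl; auto).
  assert (Hg1a : g1 <= x * g1) by (rewrite <- (mul1g g1) at 1; apply Hri, covby_le, Hx).
  assert (Hg1a' : g1 <> x * g1).
  { intro E. apply (covby_neq Hx). apply (@mulIg _ _ g1). rewrite mul1g. exact E. }
  assert (HDT : D * (inv D * g) = g) by (group_simpl; reflexivity).
  assert (Hg1T : g1 <= inv D * g).
  { assert (H := Hri g (atom_le_inv_glb (proj1 (covby_iff_atom _ _) Hgg1))).
    revert H. group_simpl. auto. }
  assert (HaT : x * g1 <= inv D * g).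
  { apply (Hri g1) in Hxc. revert Hxc. group_simpl. auto. }
  assert (Hg1r : g1 <= meet (inv D * g) u)
    by exact (meet_glb Hg1T (le_trans (covby_le Hu1) (covby_le Hu1u))).
  destruct (exists_other_covby (glb_mulr_coatoms (inv D * g)) (mul_le_r _ HDe)
              (p := g) (q := meet (inv D * g) u) (w := g1))
    as [y [Hgy [Hyr Hyg1]]].
  - rewrite HDT. apply le_refl.
  - apply meet_lb_l.
  - exact Hgg1.
  - exact Hg1r.
  - intro E. apply Hg1a'. apply le_antisym; [exact Hg1a |].
    rewrite E at 2. exact (meet_glb HaT Hau).
  - exists y. split; [exact Hgy | split; [exact (le_trans Hyr (meet_lb_r _ _)) | exact Hyg1]].
Qed.

Lemma meet_irreducible_covby g g1 :
  meet_irreducible_neg e le meet g -> covby g g1 -> g1 <= e ->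
  meet_irreducible_neg e le meet g1.
Proof.
  (* A splitting [g1 = meet y1 y2] yields a diamond over [g1]; a second upper cover [y] of [g]
     below its top would split [g = meet g1 y]. *)
  intros [Hg Hirr] Hgg1 Hg1. split; [exact Hg1 |].
  intros [y1 [y2 [Hy1 [Hy2 [Hne1 [Hne2 Hm]]]]]].
  assert (Hlt1 : g1 < y1) by (split; [rewrite Hm; auto | auto]).
  assert (Hlt2 : g1 < y2) by (split; [rewrite Hm; auto | auto]).
  destruct (exists_covby_above Hlt1) as [u1 [Hu1 Hu1y]].
  destruct (exists_covby_above Hlt2) as [u2 [Hu2 Hu2y]].
  assert (Hu12 : u1 <> u2).
  { intros <-. apply (covby_neq Hu1). apply le_antisym; [exact (covby_le Hu1) |].
    rewrite Hm. exact (meet_glb Hu1y Hu2y). }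
  assert (Hu1u : covby u1 (join u1 u2))
    by exact (covby_join Hu2 (covby_incomparable Hu2 Hu1 (not_eq_sym Hu12)) (covby_le Hu1)).
  assert (Hu2u : covby u2 (join u1 u2)).
  { rewrite join_comm. exact (covby_join Hu1 (covby_incomparable Hu1 Hu2 Hu12) (covby_le Hu2)). }
  destruct (exists_other_upper_cover Hgg1 Hu1 Hu2 Hu12 Hu1u Hu2u) as [y [Hgy [Hyu Hyg1]]].
  apply Hirr. exists g1, y. repeat split.
  - exact Hg1.
  - apply (le_trans Hyu). apply join_lub; eapply le_trans; eassumption.
  - exact (not_eq_sym (covby_neq Hgg1)).
  - exact (not_eq_sym (covby_neq Hgy)).
  - symmetry. exact (covby_meet_of_neq Hgg1 Hgy (not_eq_sym Hyg1)).
Qed.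

Lemma meet_irreducible_dual_chain g :
  meet_irreducible_neg e le meet g -> dual_chain e le g.
Proof.
  (* A maximal counterexample [h] has a unique upper cover [g1] in [[h, e]], and [g1] is again
     meet-irreducible, hence a dual chain by maximality. *)
  intro Hirr. apply NNPP. intro Hnc.
  destruct (@exists_maximal e (fun h => meet_irreducible_neg e le meet h /\ ~ dual_chain e le h))
    as [h [[Hh Hhc] Hmax]].
  - exists g. auto.
  - intros h [[Hh _] _]. exact Hh.
  - apply Hhc. destruct (classic (h = e)) as [-> | Hne]; [apply dual_chain_refl |].
    destruct (exists_covby_above (conj (proj1 Hh) Hne)) as [g1 [Hhg1 Hg1e]].
    apply (dual_chain_covby Hhg1).
    + intros y Hhy Hye. exact (meet_irreducible_covby_le Hh Hhg1 Hg1e Hhy Hye).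
    + apply NNPP. intro Hg1c. apply (covby_neq Hhg1). symmetry.
      apply Hmax; [split; [exact (meet_irreducible_covby Hh Hhg1 Hg1e) | exact Hg1c] |].
      exact (covby_le Hhg1).
Qed.

End GlbOfCoatoms.
End RightLGroup.
End Modular.
End Noetherian.
End Lattice.

Theorem mainTheorem9 (T : Type) (mul : T -> T -> T) (inv : T -> T) (e : T)
  (le : T -> T -> Prop) (meet join : T -> T -> T) :
  is_right_lgroup mul inv e le meet join ->
  modular le meet join ->
  noetherian le ->
  (exists s_inv, is_glb le (covered_by_e e le) s_inv) ->
  forall g, negcone e le g ->
    (meet_irreducible_neg e le meet g <-> dual_chain e le g).
Proof.
  intros [Hgrp [Hpo [Hri Hlat]]] Hmod Hnoeth [D HD] g Hg. split.
  - intro Hirr. destruct (classic (g = e)) as [-> | Hne]; [exact (dual_chain_refl Hpo e) |].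
    destruct (exists_covby_below Hpo Hnoeth (conj Hg Hne)) as [a [_ Ha]].
    assert (HDe : le D e) by exact (le_trans Hpo _ _ _ (proj1 HD a Ha) (covby_le Ha)).
    exact (meet_irreducible_dual_chain Hpo Hlat Hnoeth Hmod Hgrp Hri HD HDe Hirr).
  - exact (dual_chain_meet_irreducible Hpo Hlat Hg).
Qed.
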